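(* Let $\alpha,\beta,\gamma>0$ and set $\Omega=[0,1]$. For $x\in(0,1)$ and $y\in[0,1]$ define $$f(x,y)=-\left(\frac{1}{x(1-x)}\right)^{\gamma}-\alpha\exp\bigl(-\beta(x-y)\bigr),$$ and for a Borel probability measure $\mu$ on $[0,1]$ define the payoff $\varphi(x;\mu)=\int_{[0,1]} f(x,y)\,\mu(dy)$ for $x\in(0,1)$, with $\varphi(0;\mu)=\varphi(1;\mu)=-\infty$. Then the equation $$\frac{d}{dx}\left(\frac{1}{x(1-x)}\right)^{\gamma}=\alpha\beta$$ has a unique solution $x=\hat{x}\in(0,1)$. Moreover, the Dirac measure $\delta_{\{x=\hat x\}}$ is a pure Nash equilibrium of the game with payoff $\varphi$, i.e. $\hat x\in\arg\max_{x\in[0,1]}\varphi(x;\delta_{\{x=\hat x\}})$, and it is the only pure Nash equilibrium: if $z\in[0,1]$ satisfies $z\in\arg\max_{x\in[0,1]}\varphi(x;\delta_{\{x=z\}})$, then $z=\hat x$.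
   Context: This is a population game on the action space $\Omega=[0,1]$: a distribution of actions of agents is a Borel probability measure $\mu$ on $\Omega$, and an agent choosing action $x$ receives payoff $\varphi(x;\mu)$. A pure Nash equilibrium is a Dirac measure $\delta_{\{x=z\}}$ concentrated at a point $z\in\Omega$ such that $z$ maximizes $x\mapsto\varphi(x;\delta_{\{x=z\}})$ over $\Omega$. *)

From HB Require Import structures.
From mathcomp Require Import all_boot all_order all_algebra.
From mathcomp Require Import all_classical all_reals all_analysis.
Set Implicit Arguments. Unset Strict Implicit. Unset Printing Implicit Defensive.
Import Order.TTheory GRing.Theory Num.Theory.
Local Open Scope classical_set_scope.
Local Open Scope ring_scope.

Definition gfun {R : realType} (gamma : R) (x : R) : R :=
  (1 / (x * (1 - x))) `^ gamma.

Definition ffun {R : realType} (alpha beta gamma : R) (x y : R) : R :=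
  - gfun gamma x - alpha * expR (- (beta * (x - y))).

Definition payoff {R : realType} (alpha beta gamma : R)
  (x : R) (mu : {measure set R -> \bar R}) : \bar R :=
  if (0 < x) && (x < 1) then
    (\int[mu]_(y in `[0%R, 1%R]%classic) (ffun alpha beta gamma x y)%:E)%E
  else -oo%E.

Definition pure_NE {R : realType}
  (phi : R -> {measure set R -> \bar R} -> \bar R) (z : R) : Prop :=
  0 <= z <= 1 /\
  forall x : R, 0 <= x <= 1 -> (phi x (\d_z) <= phi z (\d_z))%E.

From HB Require Import structures.
From mathcomp Require Import all_boot all_order all_algebra.
From mathcomp Require Import all_classical all_reals all_analysis.
From mathcomp Require Import ring lra measurable_realfun.
Set Implicit Arguments. Unset Strict Implicit. Unset Printing Implicit Defensive.
Import Order.TTheory GRing.Theory Num.Theory numFieldNormedType.Exports.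
Local Open Scope classical_set_scope.
Local Open Scope ring_scope.

(* Writing g = gfun gamma = exp (- gamma ln h) with h x = x (1 - x), the
   inequalities ln t <= t - 1 and exp t >= 1 + t give the quadratic minorant
   g x >= g a + g' a (x - a) + gamma g a (x - a)^2 / h a  on (0,1).
   Hence g' is injective; it vanishes at 1/2 and is unbounded near 1, so
   g' = alpha beta has exactly one root xhat.  Against \d_z the payoff is
   f(., z), which is -oo at 0 and 1; at an interior maximum z Fermat's rule
   gives g' z = alpha beta, so z = xhat.  Conversely the minorant and
   exp t >= 1 + t bound f(x, xhat) by f(xhat, xhat). *)

Section gfun.
Variables (R : realType) (gamma : R).
Implicit Types x y a : R.

Definition dgfun x := gamma * gfun gamma x * (2 * x - 1) / (x * (1 - x)).

Lemma mulr1B_gt0 x : 0 < x < 1 -> 0 < x * (1 - x).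
Proof. by move=> /andP[x0 x1]; apply: mulr_gt0 => //; lra. Qed.

Lemma is_derive_mulr1B x : is_derive x 1 (fun y : R => y * (1 - y)) (1 - 2 * x).
Proof.
have -> : (fun y : R => y * (1 - y)) = (id : R -> R) * (cst 1 - id).
  by apply/funext.
by apply: is_derive_eq; rewrite /GRing.scale /= !fctE /= mulr1; lra.
Qed.

Lemma gfunE x : 0 < x < 1 -> gfun gamma x = expR (- (gamma * ln (x * (1 - x)))).
Proof.
move=> /mulr1B_gt0 hx; rewrite /gfun /powR div1r invr_eq0 gt_eqF //.
by rewrite lnV ?mulrN // posrE.
Qed.

Lemma gfun_gt0 x : 0 < x < 1 -> 0 < gfun gamma x.
Proof. by move=> x01; rewrite gfunE // expR_gt0. Qed.

Lemma is_derive_gfun x : 0 < x < 1 -> is_derive x 1 (gfun gamma) (dgfun x).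
Proof.
move=> x01; have hx := mulr1B_gt0 x01.
have -> : gfun gamma = (@powR R ^~ gamma) \o (fun y : R => (y * (1 - y))^-1).
  by apply/funext => y; rewrite /gfun /= div1r.
have hVx : 0 < (x * (1 - x))^-1 by rewrite invr_gt0.
have Dcomp := is_derive1_comp (g := fun y : R => (y * (1 - y))^-1)
  (is_derive1_powR gamma hVx)
  (is_deriveV (f := fun y : R => y * (1 - y)) (lt0r_neq0 hx) (is_derive_mulr1B x)).
apply: is_derive_eq Dcomp _.
have -> : (x * (1 - x))^-1 `^ (gamma - 1) = gfun gamma x * (x * (1 - x)).
  rewrite gfunE // /powR invr_eq0 gt_eqF // lnV ?posrE //.
  by rewrite mulrBl mul1r mulrN opprK expRD lnK ?posrE.
rewrite /GRing.scale /= /dgfun; field.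
by case/andP: x01 => ? ?; apply/andP; split; apply/eqP; lra.
Qed.

Lemma derive1_gfun x : 0 < x < 1 -> derive1 (gfun gamma) x = dgfun x.
Proof. by move=> x01; rewrite derive1E; have [] := is_derive_gfun x01. Qed.

Lemma dgfun_half : dgfun (1 / 2) = 0.
Proof. by rewrite /dgfun; field. Qed.

Lemma dgfun_continuous x : 0 < x < 1 -> {for x, continuous dgfun}.
Proof.
move=> x01; have hx := mulr1B_gt0 x01.
have gc : {for x, continuous (gfun gamma)}.
  have [dg _] := is_derive_gfun x01.
  exact/differentiable_continuous/derivable1_diffP.
apply: cvgM; last first.
  apply: cvgV; first by rewrite gt_eqF.
  by apply: cvgM; [exact: cvg_id | apply: cvgB; [exact: cvg_cst | exact: cvg_id]].
apply: cvgM; last first.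
  by apply: cvgB; [apply: cvgM; [exact: cvg_cst | exact: cvg_id] | exact: cvg_cst].
by apply: cvgM; [exact: cvg_cst | exact: gc].
Qed.

Hypothesis gamma_gt0 : 0 < gamma.

(* From ln t <= t - 1 at t = h x / h a, then exp s >= 1 + s at s = -gamma ln t. *)
Lemma gfun_quadratic_minorant a x : 0 < a < 1 -> 0 < x < 1 ->
  gfun gamma a + dgfun a * (x - a)
    + gamma * gfun gamma a * (x - a) ^+ 2 / (a * (1 - a)) <= gfun gamma x.
Proof.
move=> a01 x01; have hH := mulr1B_gt0 a01; have hK := mulr1B_gt0 x01.
have G0 := gfun_gt0 a01.
set H := a * (1 - a) in hH *; set K := x * (1 - x) in hK *.
set G := gfun gamma a in G0 *; set u := ln K - ln H.
have ln_le : u <= K / H - 1.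
  have -> : u = ln (K / H) by rewrite lnM ?lnV ?posrE ?invr_gt0.
  have := expR_ge1Dx (ln (K / H)); rewrite lnK ?posrE ?divr_gt0 //; lra.
have exp_ge : G * (1 - gamma * u) <= gfun gamma x.
  have -> : gfun gamma x = G * expR (- (gamma * u)).
    by rewrite /G !gfunE // -expRD /u; congr expR; ring.
  by rewrite ler_pM2l //; have := expR_ge1Dx (- (gamma * u)); lra.
apply: le_trans exp_ge.
have -> : G + dgfun a * (x - a) + gamma * G * (x - a) ^+ 2 / H
    = G * (1 - gamma * (K / H - 1)).
  rewrite /dgfun -/G /K /H; field.
  by case/andP: a01 => ? ?; apply/andP; split; apply/eqP; lra.
have : 0 <= K / H - 1 - u by lra.
by move=> /(mulr_ge0 (mulr_ge0 (ltW G0) (ltW gamma_gt0))); nra.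
Qed.

Lemma dgfun_inj x y : 0 < x < 1 -> 0 < y < 1 -> dgfun x = dgfun y -> x = y.
Proof.
move=> x01 y01 Dxy; apply/eqP; apply: contraT => xy.
have T1 := gfun_quadratic_minorant y01 x01.
have T2 := gfun_quadratic_minorant x01 y01; rewrite Dxy in T2.
have quad_gt0 a b : 0 < a < 1 -> a != b ->
    0 < gamma * gfun gamma a * (b - a) ^+ 2 / (a * (1 - a)).
  move=> a01 ab; apply: divr_gt0; last exact: mulr1B_gt0.
  apply: mulr_gt0; first by rewrite mulr_gt0 ?gfun_gt0.
  by rewrite exprn_even_gt0 //= subr_eq0 eq_sym.
have Px := quad_gt0 _ _ x01 xy; rewrite eq_sym in xy.
have Py := quad_gt0 _ _ y01 xy.
lra.
Qed.

Lemma dgfun_unbounded M : 0 < M -> exists2 b, 1 / 2 <= b < 1 & M <= dgfun b.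
Proof.
move=> M0; pose c := Num.min (1 / 4) (gamma / (2 * M)).
have c0 : 0 < c by rewrite lt_min; apply/andP; split; [lra | rewrite divr_gt0 //; lra].
have c14 : c <= 1 / 4 by rewrite ge_min lexx.
have cM : c * (2 * M) <= gamma.
  by rewrite -ler_pdivlMr ?mulr_gt0 // ge_min lexx orbT.
exists (1 - c); first by apply/andP; split; lra.
have b01 : 0 < 1 - c < 1 by apply/andP; split; lra.
have g_ge1 : 1 <= gfun gamma (1 - c).
  rewrite gfunE //; apply: le_trans (expR_ge1Dx _).
  have : ln ((1 - c) * (1 - (1 - c))) <= 0 by apply: ln_le0; nra.
  by move=> /(ler_wpM2l (ltW gamma_gt0)); rewrite mulr0; lra.
rewrite /dgfun ler_pdivlMr ?mulr1B_gt0 //.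
have : gamma / 2 <= gamma * gfun gamma (1 - c) * (2 * (1 - c) - 1).
  have : gamma <= gamma * gfun gamma (1 - c) by rewrite ler_peMr // ltW.
  have : 0 <= gamma * gfun gamma (1 - c) * (1 / 4 - c).
    by rewrite mulr_ge0 ?subr_ge0 // mulr_ge0 ?ltW ?gfun_gt0.
  lra.
have : M * ((1 - c) * (1 - (1 - c))) <= M * c by rewrite ler_pM2l //; nra.
lra.
Qed.

Lemma dgfun_surjective M : 0 < M -> exists2 x, 0 < x < 1 & dgfun x = M.
Proof.
move=> M0; have [b /andP[b_ge b_lt] Mb] := dgfun_unbounded M0.
have [x] : exists2 x, x \in `[1 / 2, b] & dgfun x = M.
  apply: IVT => //.
  - apply: continuous_in_subspaceT => y; rewrite inE /= in_itv /= => /andP[? ?].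
    by apply: dgfun_continuous; apply/andP; split; lra.
  - rewrite dgfun_half; apply/andP; split; first by rewrite ge_min ltW.
    by rewrite le_max Mb orbT.
by rewrite in_itv /= => /andP[? ?] Dx; exists x => //; apply/andP; split; lra.
Qed.

End gfun.

Section game.
Variables (R : realType) (alpha beta gamma : R).
Implicit Types x z : R.

Lemma measurable_ffun x : measurable_fun setT (ffun alpha beta gamma x).
Proof.
apply: measurable_funB => //; apply: measurable_funM => //.
apply: measurableT_comp => //; apply: measurableT_comp => //.
by apply: measurable_funM => //; exact: measurable_funB.
Qed.

Lemma payoff_dirac x z : 0 < x < 1 -> 0 <= z <= 1 ->
  payoff alpha beta gamma x \d_z = (ffun alpha beta gamma x z)%:E.
Proof.
move=> x01 z01; rewrite /payoff x01 integral_dirac //.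
  by rewrite diracE mem_set ?mul1e // in_itv.
by apply: measurableT_comp => //; apply: measurable_funTS; exact: measurable_ffun.
Qed.

Lemma is_derive_ffun z x : 0 < x < 1 ->
  is_derive x 1 (ffun alpha beta gamma ^~ z)
    (- dgfun gamma x + alpha * beta * expR (- (beta * (x - z)))).
Proof.
move=> x01.
have -> : ffun alpha beta gamma ^~ z =
    - gfun gamma - alpha \*: (expR \o (fun y => - (beta * (y - z)))).
  by apply/funext.
have Dlin : is_derive x 1 (fun y => - (beta * (y - z))) (- beta).
  have -> : (fun y => - (beta * (y - z))) = - (beta \*: ((id : R -> R) - cst z)).
    by apply/funext.
  by apply: is_derive_eq; rewrite /GRing.scale /= subr0 mulr1.
have Dg := is_derive_gfun gamma x01.
have Dexp := is_derive1_comp (g := fun y => - (beta * (y - z))) (is_derive_expR _) Dlin.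
by apply: is_derive_eq; rewrite /GRing.scale /=; ring.
Qed.

Lemma pure_NE_interior z : pure_NE (payoff alpha beta gamma) z -> 0 < z < 1.
Proof.
move=> [z01 z_max]; apply: contraT => z_bd.
have half01 : 0 < (1 / 2 : R) < 1 by apply/andP; split; lra.
have half01' : 0 <= (1 / 2 : R) <= 1 by apply/andP; split; lra.
have := z_max _ half01'.
by rewrite payoff_dirac // [X in (_ <= X)%E]/payoff (negbTE z_bd) leeNy_eq.
Qed.

Lemma pure_NE_root z :
  pure_NE (payoff alpha beta gamma) z -> dgfun gamma z = alpha * beta.
Proof.
move=> NEz; have z01 := pure_NE_interior NEz; have [z01' z_max] := NEz.
have z_argmax t : t \in `]0, 1[ ->
    ffun alpha beta gamma t z <= ffun alpha beta gamma z z.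
  rewrite in_itv /= => t01.
  have t01' : 0 <= t <= 1 by case/andP: t01 => ? ?; apply/andP; split; lra.
  by have := z_max t t01'; rewrite !payoff_dirac // lee_fin.
have [_ D0] : is_derive z 1 (ffun alpha beta gamma ^~ z) 0.
  apply: derive1_at_max ler01 _ _ z_argmax; last by rewrite in_itv.
  by move=> t; rewrite in_itv /= => t01; case: (is_derive_ffun z t01).
have [_] := is_derive_ffun z z01.
by rewrite D0 subrr mulr0 oppr0 expR0 mulr1; lra.
Qed.

Hypotheses (alpha_gt0 : 0 < alpha) (gamma_gt0 : 0 < gamma).

Lemma ffun_le_diag xh x : 0 < xh < 1 -> dgfun gamma xh = alpha * beta ->
  0 < x < 1 -> ffun alpha beta gamma x xh <= ffun alpha beta gamma xh xh.
Proof.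
move=> xh01 Dxh x01.
have := gfun_quadratic_minorant gamma_gt0 xh01 x01; rewrite Dxh.
have : alpha * (1 - beta * (x - xh)) <= alpha * expR (- (beta * (x - xh))).
  by rewrite ler_pM2l // -mulrN expR_ge1Dx.
have : 0 <= gamma * gfun gamma xh * (x - xh) ^+ 2 / (xh * (1 - xh)).
  apply: divr_ge0; last exact/ltW/mulr1B_gt0.
  by apply: mulr_ge0 (sqr_ge0 _); rewrite mulr_ge0 ?ltW ?gfun_gt0.
by rewrite /ffun subrr mulr0 oppr0 expR0 mulr1; lra.
Qed.

Lemma pure_NE_of_root xh : 0 < xh < 1 -> dgfun gamma xh = alpha * beta ->
  pure_NE (payoff alpha beta gamma) xh.
Proof.
move=> xh01 Dxh; have xh01' : 0 <= xh <= 1.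
  by case/andP: xh01 => ? ?; apply/andP; split; lra.
split=> // x _; case: (boolP (0 < x < 1)) => x01.
  by rewrite !payoff_dirac // lee_fin ffun_le_diag.
by rewrite /payoff (negbTE x01) leNye.
Qed.

End game.

Theorem mainTheorem1 (R : realType) (alpha beta gamma : R) :
  0 < alpha -> 0 < beta -> 0 < gamma ->
  exists xhat : R,
    [/\ 0 < xhat < 1,
        derive1 (gfun gamma) xhat = alpha * beta,
        (forall x : R, 0 < x < 1 -> derive1 (gfun gamma) x = alpha * beta -> x = xhat),
        pure_NE (payoff alpha beta gamma) xhat
      & forall z : R, pure_NE (payoff alpha beta gamma) z -> z = xhat].
Proof.
move=> alpha_gt0 beta_gt0 gamma_gt0.
have [xh xh01 Dxh] := dgfun_surjective gamma_gt0 (mulr_gt0 alpha_gt0 beta_gt0).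
exists xh; split.
- exact: xh01.
- by rewrite derive1_gfun.
- move=> x x01; rewrite derive1_gfun // -Dxh.
  exact: dgfun_inj.
- exact: pure_NE_of_root.
- move=> z NEz; apply: (dgfun_inj gamma_gt0 (pure_NE_interior NEz) xh01).
  by rewrite Dxh (pure_NE_root NEz).
Qed.
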